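(* Let $P$ be a poset and let $C_2$ denote the 2-chain. If two elements of $P$ are $(C_2, 2, k)$-symmetric, then $k \in \{0, 1\}$.
   Context: The 2-chain $C_2$ is the poset $\{x<y\}$. For a poset $X$, $\ell(X)$ is the cardinality of a longest chain in $X$. A subset $A$ of a poset $X$ is maximally ordered in $X$ if $|\{(a,b)\in A\times A : a<b\}|$ is maximal among all subsets of $X$ of cardinality $|A|$. For $\sigma\in\mathrm{Aut}(P)$ let $\Sigma(\sigma)=\{a\in P:\sigma(a)\ne a\}$. For a finite poset $Q$ and integer $r\ge2$: $\sigma\in\mathrm{Aut}(P)$ is a $(Q,r)$-generator if there exist subsets $S_0,\dots,S_{r-1}\subset\Sigma(\sigma)$, each isomorphic to $Q$, which are smallest maximally ordered subsets of $\Sigma(\sigma)$ with $\sigma(S_i)=S_{(i+1)\bmod r}$, $\ell(S_i)=\ell(\Sigma(\sigma))$ for all $i$, and $\bigcup_i S_i=\Sigma(\sigma)$; any two distinct $S_i,S_j$ are $(Q,r)$-symmetric subsets. Elements $a,b\in P$ are $(Q,r,0)$-symmetric if $a=b$; $(Q,r,1)$-symmetric if there are $(Q,r)$-symmetric subsets $A,B$ with $(Q,r)$-generator $\sigma$ such that $a\in A$ and $b=\sigma^q(a)\in B$ for some $1\le q<r$; for $n\ge2$, $(Q,r,n)$-symmetric if they are not $(Q,r,j)$-symmetric for any $j<n$ but there exist $c\in P$ and $j<n$ with $a$ $(Q,r,j)$-symmetric to $c$ and $c$ $(Q,r,n-j)$-symmetric to $b$. *)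

From HB Require Import structures.
From mathcomp Require Import all_boot all_order.
From mathcomp Require Import finmap.

Set Implicit Arguments.
Unset Strict Implicit.
Unset Printing Implicit Defensive.

Import Order.TTheory.
Local Open Scope order_scope.
Local Open Scope fset_scope.

Section PosetSymmetry.

Context {d : Order.disp_t} {T : porderType d}.

Definition is_aut (s : T -> T) : Prop :=
  bijective s /\ forall x y, (s x <= s y) = (x <= y).

Definition moved (s : T -> T) : T -> Prop := fun a => s a != a.

Definition subX (X : T -> Prop) (A : {fset T}) : Prop :=
  forall a, a \in A -> X a.

Definition nlt (A : {fset T}) : nat :=
  #|` [fset p in A `*` A | p.1 < p.2]|.

Definition max_ordered (X : T -> Prop) (A : {fset T}) : Prop :=
  subX X A /\
  forall B : {fset T}, subX X B -> #|` B| = #|` A| -> nlt B <= nlt A.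

Definition is_chain (C : {fset T}) : Prop :=
  forall a b, a \in C -> b \in C -> (a <= b) || (b <= a).

Definition chain_length (X : T -> Prop) (n : nat) : Prop :=
  (exists C : {fset T}, [/\ subX X C, is_chain C & #|` C| = n]) /\
  (forall C : {fset T}, subX X C -> is_chain C -> #|` C| <= n).

Definition same_length (X Y : T -> Prop) : Prop :=
  exists n, chain_length X n /\ chain_length Y n.

Definition memS (S : {fset T}) : T -> Prop := fun x => x \in S.

Definition iso_to {dq : Order.disp_t} (Q : finPOrderType dq) (S : {fset T}) : Prop :=
  exists f : Q -> T,
    [/\ injective f,
        (forall a, a \in S <-> exists q, f q = a) &
        (forall p q, (f p <= f q) = (p <= q))].

Definition smallest_max_ordered (X : T -> Prop) (S : {fset T}) : Prop :=
  [/\ max_ordered X S, same_length (memS S) X &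
      forall B : {fset T}, max_ordered X B -> same_length (memS B) X ->
        #|` S| <= #|` B|].

Definition generator {dq : Order.disp_t} (Q : finPOrderType dq) (r : nat)
    (s : T -> T) (Ss : nat -> {fset T}) : Prop :=
  [/\ (2 <= r)%N, is_aut s,
      (forall i, (i < r)%N ->
        [/\ subX (moved s) (Ss i), iso_to Q (Ss i),
            smallest_max_ordered (moved s) (Ss i),
            (forall b, b \in Ss ((i + 1) %% r)%N <-> (exists2 a, a \in Ss i & s a = b)) &
            same_length (memS (Ss i)) (moved s)]) &
      (forall a, moved s a <-> (exists2 i, (i < r)%N & a \in Ss i))].

Definition sym1 {dq : Order.disp_t} (Q : finPOrderType dq) (r : nat) (a b : T) : Prop :=
  exists s (Ss : nat -> {fset T}) i j q,
    [/\ generator Q r s Ss, (i < r)%N, (j < r)%N & Ss i != Ss j] /\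
    [/\ a \in Ss i, (1 <= q)%N, (q < r)%N, b = iter q s a & b \in Ss j].

(* (Q,r,n)-symmetry, defined by (fuel-driven) strong recursion on n.
   symAux f n is used only with f > n, where it is the genuine notion. *)
Fixpoint symAux {dq : Order.disp_t} (Q : finPOrderType dq) (r : nat)
    (fuel n : nat) (a b : T) : Prop :=
  match fuel with
  | 0 => False
  | f.+1 =>
    match n with
    | 0 => a = b
    | 1 => sym1 Q r a b
    | _ =>
      (forall j, (j < n)%N -> ~ symAux Q r f j a b) /\
      exists c j, [/\ (1 <= j)%N, (j < n)%N,
                      symAux Q r f j a c & symAux Q r f (n - j) c b]
    end
  end.

Definition sym {dq : Order.disp_t} (Q : finPOrderType dq) (r n : nat) (a b : T) : Prop :=
  symAux Q r n.+1 n a b.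

End PosetSymmetry.

Definition C2 := 'I_2.

From HB Require Import structures.
From mathcomp Require Import all_boot all_order.
From mathcomp Require Import finmap.

(** A (C2,2)-generator s is an involution whose moved set is {a, a', s a, s a'}
    for a 2-chain {a, a'}; each moved x is incomparable with s x, and the moved
    set contains no 3-chain.  Let a be (C2,2,1)-symmetric to c = s1 a and c to
    b = s2 c with b <> a.  Then s1 fixes b: in the only delicate case b = a',
    the point s2 a is fixed by s1 and lies beyond a on the side opposite to a',
    so that it forms a 3-chain with a and a' in the moved set of s2.  Hence the
    conjugate s1 s2 s1 is a (C2,2)-generator sending a to b, i.e. a and b are
    (C2,2,1)-symmetric.  Two (C2,2,1)-steps thus never yield a
    (C2,2,2)-symmetric pair, and by induction no pair is (C2,2,k)-symmetric
    for k >= 2. *)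

Set Implicit Arguments.
Unset Strict Implicit.
Unset Printing Implicit Defensive.

Import Order.TTheory.
Local Open Scope order_scope.
Local Open Scope fset_scope.

Lemma mem_imfset_can (K V : choiceType) (f : K -> V) (f' : V -> K) :
  cancel f f' -> cancel f' f -> forall (A : {fset K}) y, (y \in f @` A) = (f' y \in A).
Proof. by move=> fK f'K A y; rewrite -{1}(f'K y) mem_imfset //; apply: can_inj fK. Qed.

Section OrderEmbedding.
Context {d d' : Order.disp_t} {T : porderType d} {T' : porderType d'}.
Variable g : T -> T'.
Hypothesis le_g : {mono g : x y / x <= y}.

Let g_inj : injective g := inc_inj le_g.

Lemma card_imfset_mono (A : {fset T}) : #|` g @` A| = #|` A|.
Proof. exact: card_imfset g_inj. Qed.

Lemma is_chain_imfset_mono (C : {fset T}) : is_chain C -> is_chain (g @` C).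
Proof.
move=> chainC _ _ /imfsetP[x xC ->] /imfsetP[y yC ->].
by rewrite !le_g; apply: chainC.
Qed.

Lemma nlt_imfset_mono (A : {fset T}) : nlt (g @` A) = nlt A.
Proof.
have lt_g := leW_mono le_g.
pose g2 (p : T * T) := (g p.1, g p.2).
have g2_inj : injective g2 by move=> [x y] [x' y'] [/g_inj -> /g_inj ->].
rewrite /nlt; have -> : [fset p in g @` A `*` g @` A | p.1 < p.2] =
                        g2 @` [fset p in A `*` A | p.1 < p.2].
  apply/fsetP => -[x y]; rewrite !inE /=; apply/idP/imfsetP => [|[[x' y']]].
    case/andP=> /andP[/imfsetP[x' x'A ->] /imfsetP[y' y'A ->]].
    by rewrite lt_g => lt'; exists (x', y'); rewrite // !inE /= x'A y'A.
  rewrite !inE /= => /andP[/andP[x'A y'A] lt'] [-> ->].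
  by rewrite !in_imfset //= lt_g.
exact: card_imfset g2_inj.
Qed.

End OrderEmbedding.

Section OrderIsomorphism.
Context {d d' : Order.disp_t} {T : porderType d} {T' : porderType d'}.
Variables (g : T -> T') (g' : T' -> T).
Hypotheses (gK : cancel g g') (g'K : cancel g' g).
Hypothesis le_g : {mono g : x y / x <= y}.

Let le_g' : {mono g' : x y / x <= y} := can_mono g'K le_g.
Let mem_g := mem_imfset_can gK g'K.
Let mem_g' := mem_imfset_can g'K gK.

Section Image.
Variables (X : T -> Prop) (Y : T' -> Prop).
Hypothesis XY : forall y, Y y <-> X (g' y).

Lemma subX_imfset (A : {fset T}) : subX X A -> subX Y (g @` A).
Proof. by move=> AX y; rewrite mem_g XY => /AX. Qed.

Lemma subX_imfset_inv (B : {fset T'}) : subX Y B -> subX X (g' @` B).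
Proof. by move=> BY x; rewrite mem_g' => /BY /XY; rewrite gK. Qed.

Lemma max_ordered_imfset (S : {fset T}) : max_ordered X S -> max_ordered Y (g @` S).
Proof.
case=> SX maxS; split=> [|B BY cardB]; first exact: subX_imfset.
rewrite nlt_imfset_mono // -(nlt_imfset_mono le_g' B).
apply: maxS; first exact: subX_imfset_inv.
by rewrite card_imfset_mono // cardB card_imfset_mono.
Qed.

Lemma chain_length_transport n : chain_length X n -> chain_length Y n.
Proof.
case=> [[C [CX chainC <-]] maxC]; split.
  exists (g @` C); split; rewrite ?card_imfset_mono //.
    exact: subX_imfset.
  exact: is_chain_imfset_mono.
move=> B /subX_imfset_inv BX /(is_chain_imfset_mono le_g') chainB.
by rewrite -(card_imfset_mono le_g' B); apply: maxC.
Qed.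

End Image.

Lemma same_length_imfset (X : T -> Prop) (Y : T' -> Prop) (S : {fset T}) :
    (forall y, Y y <-> X (g' y)) ->
  same_length (memS S) X -> same_length (memS (g @` S)) Y.
Proof.
move=> XY [n [lenS lenX]]; exists n; split; last exact: chain_length_transport lenX.
by apply: (chain_length_transport (X := memS S)) => // y; rewrite /memS mem_g.
Qed.

Lemma iso_to_imfset {dq : Order.disp_t} (Q : finPOrderType dq) (S : {fset T}) :
  iso_to Q S -> iso_to Q (g @` S).
Proof.
case=> f [f_inj memf le_f]; exists (g \o f); split.
- by move=> p q /= /(inc_inj le_g) /f_inj.
- move=> y; rewrite mem_g memf; split=> -[q fq]; exists q => /=.
    by rewrite fq g'K.
  by rewrite -fq gK.
- by move=> p q /=; rewrite le_g le_f.
Qed.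

End OrderIsomorphism.

Section SmallestMaxOrdered.
Context {d d' : Order.disp_t} {T : porderType d} {T' : porderType d'}.
Variables (g : T -> T') (g' : T' -> T).
Hypotheses (gK : cancel g g') (g'K : cancel g' g).
Hypothesis le_g : {mono g : x y / x <= y}.

Let le_g' : {mono g' : x y / x <= y} := can_mono g'K le_g.

Lemma smallest_max_ordered_imfset (X : T -> Prop) (Y : T' -> Prop) (S : {fset T}) :
    (forall y, Y y <-> X (g' y)) ->
  smallest_max_ordered X S -> smallest_max_ordered Y (g @` S).
Proof.
move=> XY; have YX x : X x <-> Y (g x) by rewrite XY gK.
case=> maxS lenS minS; split.
- exact: max_ordered_imfset maxS.
- exact: same_length_imfset lenS.
- move=> B maxB lenB; rewrite card_imfset_mono // -(card_imfset_mono le_g' B).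
  apply: minS; first exact: max_ordered_imfset maxB.
  exact: same_length_imfset lenB.
Qed.

End SmallestMaxOrdered.

Section GeneratorConjugation.
Context {d : Order.disp_t} {T : porderType d}.
Variables g g' : T -> T.
Hypotheses (gK : cancel g g') (g'K : cancel g' g).
Hypothesis le_g : {mono g : x y / x <= y}.

Let le_g' : {mono g' : x y / x <= y} := can_mono g'K le_g.
Let mem_g := mem_imfset_can gK g'K.

Lemma moved_conj (s : T -> T) x : moved (g \o s \o g') x <-> moved s (g' x).
Proof. by rewrite /moved /= -{2}(g'K x) (inj_eq (can_inj gK)). Qed.

Lemma is_aut_conj (s : T -> T) : is_aut s -> is_aut (g \o s \o g').
Proof.
case=> s_bij le_s; split; last by move=> x y /=; rewrite le_g le_s le_g'.
apply: bij_comp; last exact: Bijective g'K gK.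
by apply: bij_comp => //; exact: Bijective gK g'K.
Qed.

Lemma generator_conj {dq : Order.disp_t} (Q : finPOrderType dq) r s Ss :
  generator Q r s Ss -> generator Q r (g \o s \o g') (fun i => g @` Ss i).
Proof.
have movedE := moved_conj s.
case=> r2 aut_s shapeS coverS; split=> //; first exact: is_aut_conj.
  move=> i lt_ir; have [SX isoS smallS stepS lenS] := shapeS i lt_ir; split.
  - exact: subX_imfset.
  - exact: iso_to_imfset.
  - exact: smallest_max_ordered_imfset.
  - move=> y; rewrite mem_g stepS; split=> -[x xS sx].
      by exists (g x); rewrite ?mem_g /= gK // sx g'K.
    by exists (g' x); rewrite -?mem_g // -sx /= gK.
  - exact: same_length_imfset.
move=> x; rewrite movedE coverS; split=> -[i lt_ir xS]; exists i => //.
  by rewrite mem_g.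
by rewrite -mem_g.
Qed.

End GeneratorConjugation.

Section PosetFacts.
Context {d : Order.disp_t} {T : porderType d}.

Lemma comparable_mono {d' : Order.disp_t} {T' : porderType d'} (f : T -> T') :
  {mono f : x y / x <= y} -> {mono f : x y / x >=< y}.
Proof. by move=> le_f x y; rewrite /Order.comparable !le_f. Qed.

Lemma involutive_comparable_fixed (s : T -> T) x :
  involutive s -> {mono s : x y / x <= y} -> x >=< s x -> s x = x.
Proof.
move=> sK le_s /orP[le_xs|le_sx]; apply: le_anti; rewrite ?le_xs ?le_sx ?andbT //.
  by rewrite -{2}(sK x) le_s.
by rewrite -{1}(sK x) le_s.
Qed.

Lemma lt_homo_pair_fixed (h : T -> T) u v : {homo h : x y / x < y} -> u < v ->
  h u \in [fset u; v] -> h v \in [fset u; v] -> h u = u /\ h v = v.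
Proof.
move=> lt_h uv; rewrite !inE => /orP[]/eqP hu /orP[]/eqP hv //;
  have := lt_h _ _ uv; rewrite hu hv ?ltxx // => vu.
by have := lt_trans uv vu; rewrite ltxx.
Qed.

Lemma iso_to_C2 (S : {fset T}) :
  iso_to (C2 : finPOrderType _) S -> exists u v, u < v /\ S = [fset u; v].
Proof.
case=> f [f_inj memf le_f]; exists (f ord0), (f ord_max); split.
  by rewrite lt_neqAle (inj_eq f_inj) le_f.
apply/fsetP => x; rewrite !inE; apply/idP/idP => [/memf[[[|[|//]] lt_q2] <-]|].
- by apply/orP; left; apply/eqP; congr f; apply: val_inj.
- by apply/orP; right; apply/eqP; congr f; apply: val_inj.
by case/orP => /eqP ->; apply/memf; eexists.
Qed.

Lemma chain_length_le_card (S : {fset T}) n : chain_length (memS S) n -> (n <= #|` S|)%N.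
Proof. by case=> [[C [CS _ <-]] _]; apply: fsubset_leq_card; apply/fsubsetP. Qed.

Lemma chain_length_gt2 (X : T -> Prop) n x y z :
  chain_length X n -> X x -> X y -> X z -> x < y -> y < z -> (2 < n)%N.
Proof.
case=> _ maxC Xx Xy Xz xy yz; have xz := lt_trans xy yz.
have <- : #|` x |` [fset y; z]| = 3.
  by rewrite cardfsU1 cardfs2 !inE (lt_eqF xy) (lt_eqF xz) (lt_eqF yz).
apply: maxC => [w|w w']; rewrite !inE; first by case/or3P => /eqP ->.
by case/or3P => /eqP -> /or3P[]/eqP ->;
  rewrite ?lexx ?(ltW xy) ?(ltW yz) ?(ltW xz) ?orbT.
Qed.

End PosetFacts.

Section C2Generator.
Context {d : Order.disp_t} {T : porderType d}.
Variables (s : T -> T) (Ss : nat -> {fset T}).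
Hypothesis gen : generator (C2 : finPOrderType _) 2 s Ss.

Lemma C2gen_le : {mono s : x y / x <= y}.
Proof. by case: gen => _ []. Qed.

Lemma C2gen_lt : {mono s : x y / x < y}.
Proof. exact: leW_mono C2gen_le. Qed.

Lemma C2gen_cover x : moved s x <-> exists2 i, (i < 2)%N & x \in Ss i.
Proof. by case: gen. Qed.

Lemma C2gen_pair i : (i < 2)%N -> exists u v, u < v /\ Ss i = [fset u; v].
Proof. by case: gen => _ _ shapeS _ /shapeS[_ /iso_to_C2]. Qed.

Lemma C2gen_image i : (i < 2)%N -> s @` Ss i = Ss (1 - i).
Proof.
case: gen => _ _ shapeS _ lt_i2; have [_ _ _ stepS _] := shapeS i lt_i2.
have <- : ((i + 1) %% 2 = 1 - i)%N by case: i lt_i2 {shapeS stepS} => [|[|]].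
apply/fsetP => y; apply/imfsetP/idP => [[x xS ->]|/stepS[x xS <-]].
  by apply/stepS; exists x.
by exists x.
Qed.

Lemma C2gen_moved i x : (i < 2)%N -> moved s x <-> x \in Ss i `|` s @` Ss i.
Proof.
move=> lt_i2; rewrite C2gen_cover C2gen_image // inE; split.
  by case=> j; case: i j lt_i2 => [|[|]] // [|[|]] // _ _ ->; rewrite ?orbT.
by case/orP=> xS; [exists i | exists (1 - i)%N; first by case: i lt_i2 {xS}].
Qed.

Lemma C2gen_inv : involutive s.
Proof.
move=> x; have [sx|mx] := eqVneq (s x) x; first by rewrite !sx.
have [i lt_i2 xS] := iffLR (C2gen_cover x) mx.
have [u [v [uv Si]]] := C2gen_pair lt_i2.
have SsK : s @` (s @` Ss i) = Ss i.
  by rewrite !C2gen_image ?subKn //; case: i lt_i2 {xS Si}.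
have ssS y : y \in [fset u; v] -> (s \o s) y \in [fset u; v].
  by rewrite -Si => yS; rewrite -SsK; do 2 apply: in_imfset.
have lt_ss : {homo s \o s : y z / y < z} by move=> y z yz /=; rewrite !C2gen_lt.
have [uE vE] : s (s u) = u /\ s (s v) = v.
  by apply: lt_homo_pair_fixed lt_ss uv _ _; apply: ssS; rewrite !inE eqxx ?orbT.
by move: xS; rewrite Si !inE => /orP[]/eqP->; rewrite ?uE ?vE.
Qed.

Lemma C2gen_incomparable x : moved s x -> x >< s x.
Proof.
by apply: contraNN => /(involutive_comparable_fixed C2gen_inv C2gen_le)/eqP.
Qed.

Lemma C2gen_no_3chain x y z :
  moved s x -> moved s y -> moved s z -> x < y -> y < z -> False.
Proof.
move=> mx my mz xy yz; case: gen => _ _ shapeS _.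
have [_ _ _ _ [n [lenS lenX]]] := shapeS 0%N isT.
have [u [v [_ S0]]] := C2gen_pair (isT : (0 < 2)%N).
have := chain_length_le_card lenS; rewrite S0 cardfs2.
have := chain_length_gt2 lenX mx my mz xy yz.
by case: (u != v) => /leq_trans/[apply].
Qed.

Lemma C2gen_partner a : moved s a ->
  exists a', [/\ a' != a, a >=< a' &
    forall x, moved s x <-> x \in [fset a; a'; s a; s a']].
Proof.
move=> /C2gen_cover[i lt_i2 aS]; have [u [v [uv Si]]] := C2gen_pair lt_i2.
have [a' [a'a cmp Si']] : exists a', [/\ a' != a, a >=< a' & Ss i = [fset a; a']].
  move: aS; rewrite Si !inE => /orP[]/eqP->; [exists v | exists u].
    by rewrite (gt_eqF uv) (lt_comparable uv).
  by rewrite (lt_eqF uv) (gt_comparable uv) fsetUC.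
exists a'; split=> // x; apply: iff_trans (C2gen_moved x lt_i2) _.
by rewrite Si' imfset_fset2 fsetUA.
Qed.

End C2Generator.

Section C2Composition.
Context {d : Order.disp_t} {T : porderType d}.
Variables (s1 s2 : T -> T) (Ss1 Ss2 : nat -> {fset T}).
Hypotheses (gen1 : generator (C2 : finPOrderType _) 2 s1 Ss1)
           (gen2 : generator (C2 : finPOrderType _) 2 s2 Ss2).

Let s1K := C2gen_inv gen1.
Let s2K := C2gen_inv gen2.
Let lt_s1 := C2gen_lt gen1.
Let lt_s2 := C2gen_lt gen2.

Lemma C2gen_partner_image a a' : a' != a -> a >=< a' ->
    (forall x, moved s1 x <-> x \in [fset a; a'; s1 a; s1 a']) ->
  s2 (s1 a) != a'.
Proof.
move=> a'a cmp moved1E; apply/eqP => s2c.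
have ma : moved s1 a by apply/moved1E; rewrite !inE eqxx.
have s2a' : s2 a' = s1 a by rewrite -s2c s2K.
have m2a : s2 a != a.
  apply/eqP => s2a; move: (C2gen_incomparable gen1 ma).
  by rewrite -{1}s2a -s2a' (comparable_mono (C2gen_le gen2)) cmp.
set x := s2 a in m2a *.
have x_lt_c : (x < s1 a) = (a < a') by rewrite -s2a' lt_s2.
have c_lt_x : (s1 a < x) = (a' < a) by rewrite -s2a' lt_s2.
have s1x : s1 x = x.
  apply/eqP/negPn/negP => /moved1E; rewrite !inE -!orbA => /or4P[]/eqP xE.
  - by rewrite xE eqxx in m2a.
  - by rewrite -s2c in xE; move: ma; rewrite /moved -(can_inj s2K xE) eqxx.
  - by move: a'a; rewrite -s2c -xE s2K eqxx.
  - move: x_lt_c; rewrite xE lt_s1.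
    by case: (comparable_ltgtP cmp) a'a => // ->; rewrite eqxx.
have x_lt_a : (x < a) = (a < a') by rewrite -[x < a]lt_s1 s1x x_lt_c.
have a_lt_x : (a < x) = (a' < a) by rewrite -[a < x]lt_s1 s1x c_lt_x.
have m2x : moved s2 x by rewrite /moved /x s2K eq_sym.
have m2a' : moved s2 a'.
  by rewrite /moved s2a'; apply: contraNneq (C2gen_incomparable gen1 ma) => ->.
case: (comparable_ltgtP cmp) => [aa' | a'a' | aE].
- by apply: (C2gen_no_3chain gen2 m2x m2a m2a' _ aa'); rewrite x_lt_a.
- by apply: (C2gen_no_3chain gen2 m2a' m2a m2x a'a'); rewrite a_lt_x.
- by rewrite aE eqxx in a'a.
Qed.

Lemma C2gen_composite_fixed a : moved s1 a -> moved s2 (s1 a) -> s2 (s1 a) != a ->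
  s1 (s2 (s1 a)) = s2 (s1 a).
Proof.
move=> ma mc ba; have [a' [a'a cmp moved1E]] := C2gen_partner gen1 ma.
apply/eqP/negPn/negP => /moved1E; rewrite !inE -!orbA => /or4P[]/eqP bE.
- by rewrite bE eqxx in ba.
- by move: (C2gen_partner_image a'a cmp moved1E); rewrite bE eqxx.
- by move: mc; rewrite /moved bE eqxx.
- move: (C2gen_incomparable gen2 mc).
  by rewrite bE (comparable_mono (C2gen_le gen1)) cmp.
Qed.

End C2Composition.

Lemma sym1_C2_trans {d : Order.disp_t} {T : porderType d} (a c b : T) :
    sym1 (C2 : finPOrderType _) 2 a c -> sym1 (C2 : finPOrderType _) 2 c b ->
  a <> b -> sym1 (C2 : finPOrderType _) 2 a b.
Proof.
case=> s1 [Ss1 [i [j [q [[gen1 lt_i2 _ _] [aS q1 q2 -> _]]]]]].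
case=> s2 [Ss2 [i' [j' [q' [[gen2 lt_i'2 lt_j'2 Sij'] [cS q1' q2' -> bS]]]]]] ab.
have qE : q = 1%N by apply/anti_leq; rewrite q1 andbT; exact: q2.
have q'E : q' = 1%N by apply/anti_leq; rewrite q1' andbT; exact: q2'.
subst q q'; rewrite /= in cS bS *.
have s1K := C2gen_inv gen1.
have mem_s1 := mem_imfset_can s1K s1K.
have ma : moved s1 a by apply/(C2gen_cover gen1); exists i.
have mc : moved s2 (s1 a) by apply/(C2gen_cover gen2); exists i'.
have fixb := C2gen_composite_fixed gen1 gen2 ma mc (introN eqP (nesym ab)).
rewrite -fixb; exists (s1 \o s2 \o s1), (fun k => s1 @` Ss2 k), i', j', 1%N.
split; split=> //.
- by have := generator_conj s1K s1K (C2gen_le gen1) gen2.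
- by apply: contraNneq Sij' => E; apply/eqP/fsetP => x; rewrite -[x]s1K -!mem_s1 E.
- by rewrite mem_s1.
- by rewrite mem_s1 s1K.
Qed.

Lemma symAux_C2_le1 {d : Order.disp_t} {T : porderType d} fuel n (a b : T) :
  symAux (C2 : finPOrderType _) 2 fuel n a b -> (n <= 1)%N.
Proof.
elim: fuel n a b => [|fuel IH] [|[|n]] a b //= [not_sym [c [j [j1 jn ac cb]]]].
have le_j1 := IH _ _ _ ac; have le_nj1 := IH _ _ _ cb.
have jE : j = 1%N by apply/anti_leq; rewrite le_j1.
subst j; have nE : n = 0%N by move: le_nj1; rewrite subSS subn0 ltnS leqn0 => /eqP.
subst n; case: fuel {IH} not_sym ac cb => [|fuel] // not_sym ac cb.
exfalso; apply: (not_sym 1%N isT); apply: sym1_C2_trans ac cb _.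
exact: (not_sym 0%N isT).
Qed.

Theorem mainTheorem4 (d : Order.disp_t) (P : porderType d) (k : nat) (a b : P) :
  sym (C2 : finPOrderType _) 2 k a b -> k = 0 \/ k = 1.
Proof. by move/symAux_C2_le1; case: k => [|[|]]; [left | right |]. Qed.
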